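(* Let $H=\Theta(2,4,4)$ and $G=H^2$. Then $G$ is equitably $5$-choosable.
   Context: $\Theta(l_1,\ldots,l_m)$ denotes the graph consisting of two vertices $u,w$ joined by $m$ internally disjoint paths of lengths $l_1,\ldots,l_m$. For a graph $H$, $H^2$ has vertex set $V(H)$ with two vertices adjacent iff their distance in $H$ is 1 or 2. A $k$-assignment $L$ assigns to each vertex a set of exactly $k$ colors; an equitable $L$-coloring of $G$ is a proper coloring $f$ with $f(v)\in L(v)$ such that no color is used more than $\lceil |V(G)|/k\rceil$ times; $G$ is equitably $k$-choosable if it has an equitable $L$-coloring for every $k$-assignment $L$. *)

From mathcomp Require Import all_boot.
Set Implicit Arguments. Unset Strict Implicit. Unset Printing Implicit Defensive.

Definition sq_graph (V : finType) (e : rel V) : rel V :=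
  fun x y => (x != y) && (e x y || [exists z, e x z && e z y]).

Definition ceil_div (n k : nat) : nat := (n + k.-1) %/ k.

Definition k_assignment (V : finType) (C : eqType) (k : nat) (L : V -> seq C) : Prop :=
  forall v, uniq (L v) /\ size (L v) = k.

Definition equitable_L_coloring (V : finType) (e : rel V) (C : eqType) (k : nat)
    (L : V -> seq C) (f : V -> C) : Prop :=
  [/\ forall v, f v \in L v,
      forall x y, e x y -> f x != f y
    & forall c : C, #|[pred v | f v == c]| <= ceil_div #|V| k].

Definition equitably_choosable (V : finType) (e : rel V) (k : nat) : Prop :=
  forall (C : eqType) (L : V -> seq C), k_assignment k L ->
    exists f : V -> C, equitable_L_coloring e k L f.

(* Theta(2,4,4) on vertex set 'I_9: u = 0, w = 1;
   path of length 2:  0 - 2 - 1;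
   path of length 4:  0 - 3 - 4 - 5 - 1;
   path of length 4:  0 - 6 - 7 - 8 - 1. *)
Definition theta244_edges : seq (nat * nat) :=
  [:: (0, 2); (2, 1);
      (0, 3); (3, 4); (4, 5); (5, 1);
      (0, 6); (6, 7); (7, 8); (8, 1)].

Definition theta244 : rel 'I_9 :=
  fun x y => ((val x, val y) \in theta244_edges) || ((val y, val x) \in theta244_edges).

From mathcomp Require Import all_boot.
Set Implicit Arguments. Unset Strict Implicit. Unset Printing Implicit Defensive.

(* Since ceil(9/5) = 2, an L-colouring is equitable as soon as no colour is used
   three times.  A colour class of a proper colouring is independent in G = H^2,
   and the only independent 3-set of G is {2,4,7}; hence every proper
   L-colouring f with f 2 <> f 4 is equitable (colour_class_le2 together with
   sq_theta244_indep3).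

   Such an f is built greedily along the order 2,0,5,1,3,6,8,4,7, in which every
   vertex except 4 has at most four earlier neighbours.  Vertex 4 has earlier
   neighbours 0,1,3,5 and must also avoid the colour of 2; this is repaired by
   precolouring 2,0,5 so that the colours of 0 and 5 exclude at most one colour
   of L(4): one of them lies outside L(4), or they are equal (0 and 5 are not
   adjacent in G). *)

Lemma fresh_colour (C : eqType) (l s : seq C) :
  uniq l -> size s < size l -> exists2 x, x \in l & x \notin s.
Proof.
move=> Ul lt_sl; apply/hasP; rewrite -[has _ _]negbK has_predC negbK.
apply: contraTN lt_sl => /allP sub_ls; rewrite -leqNgt.
exact: uniq_leq_size Ul sub_ls.
Qed.

(* The greedy step still succeeds when s is as long as l, provided s wastes a
   slot: it has an entry outside l or a repeated entry. *)
Lemma fresh_colour_redundant (C : eqType) (l s : seq C) :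
  uniq l -> size s <= size l -> has [predC l] s || ~~ uniq s ->
  exists2 x, x \in l & x \notin s.
Proof.
move=> Ul le_sl redundant.
have lt_used_s : size (undup [seq y <- s | y \in l]) < size s.
  case/orP: redundant => [out_l | /negbTE dup_s].
    apply: leq_ltn_trans (size_undup _) _.
    by rewrite size_filter -(count_predC (mem l)) -[X in X < _]addn0 ltn_add2l -has_count.
  rewrite -filter_undup size_filter; apply: leq_ltn_trans (count_size _ _) _.
  by rewrite ltn_size_undup dup_s.
have [x xl x_unused] := fresh_colour Ul (leq_trans lt_used_s le_sl).
by exists x => //; apply: contra x_unused => xs; rewrite mem_undup mem_filter xl xs.
Qed.

(* Colours gc, ga, gb for a vertex c and two of its neighbours a, b (lists lc,
   la, lb) such that, seen from a further vertex t with list lt, the colours of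
   a and b exclude at most one colour of lt. *)
Definition good_precolouring (C : eqType) (lc la lb lt : seq C) (gc ga gb : C) : bool :=
  [&& gc \in lc, ga \in la, gb \in lb, ga != gc, gb != gc
    & [|| ga \notin lt, gb \notin lt | ga == gb]].

(* A good precolouring exists for any lists of a common size k >= 2: if la or lb
   leaves lt we use that colour; otherwise la is contained in lt and lb = lt
   as sets, so a and b can share a colour different from that of c. *)
Lemma exists_good_precolouring (C : eqType) (k : nat) (lc la lb lt : seq C) :
  1 < k -> (forall l, l \in [:: lc; la; lb; lt] -> uniq l /\ size l = k) ->
  exists gc ga gb, good_precolouring lc la lb lt gc ga gb.
Proof.
move=> k_gt1 lists_ok.
have [lc_in la_in lb_in lt_in] : [/\ lc \in [:: lc; la; lb; lt], la \in [:: lc; la; lb; lt],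
    lb \in [:: lc; la; lb; lt] & lt \in [:: lc; la; lb; lt]].
  by rewrite !inE !eqxx !orbT.
have fresh l s : l \in [:: lc; la; lb; lt] -> size s < k ->
    exists2 x, x \in l & x \notin s.
  by move=> /lists_ok[Ul <-]; apply: fresh_colour.
(* Once one neighbour of c has colour x, colour c and then the other neighbour. *)
have colour_around x l : l \in [:: lc; la; lb; lt] ->
    exists2 y, y \in lc & x != y /\ exists2 z, z \in l & z != y.
  move=> l_in; have [y y_lc /[!inE] x_y] := fresh lc [:: x] lc_in k_gt1.
  have [z z_l /[!inE] z_y] := fresh l [:: y] l_in k_gt1.
  by exists y => //; split; [rewrite eq_sym | exists z].
case: (boolP (has [predC lt] la)) => [/hasP[ga ga_la /= ga_lt] | /hasPn la_lt].
  have [gc gc_lc [ga_gc [gb gb_lb gb_gc]]] := colour_around ga lb lb_in.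
  by exists gc, ga, gb; rewrite /good_precolouring gc_lc ga_la gb_lb ga_gc gb_gc ga_lt.
case: (boolP (has [predC lt] lb)) => [/hasP[gb gb_lb /= gb_lt] | /hasPn lb_lt].
  have [gc gc_lc [gb_gc [ga ga_la ga_gc]]] := colour_around gb la la_in.
  by exists gc, ga, gb; rewrite /good_precolouring gc_lc ga_la gb_lb ga_gc gb_gc gb_lt orbT.
have [[Ulb size_lb] [_ size_lt]] := (lists_ok lb lb_in, lists_ok lt lt_in).
have lb_eq_lt : lb =i lt.
  apply: (uniq_min_size Ulb _ _).2 => [x /lb_lt | ]; first by rewrite negbK.
  by rewrite size_lb size_lt.
have [gc gc_lc _] := fresh lc [::] lc_in (ltnW k_gt1).
have [ga ga_la /[!inE] ga_gc] := fresh la [:: gc] la_in k_gt1.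
have ga_lb : ga \in lb by rewrite lb_eq_lt; have := la_lt ga ga_la; rewrite negbK.
by exists gc, ga, ga; rewrite /good_precolouring gc_lc ga_la ga_lb ga_gc eqxx !orbT.
Qed.

Lemma colour_class_le2 (V : finType) (e : rel V) (C : eqType) (f : V -> C) (x y : V) :
  (forall u v, e u v -> f u != f v) ->
  (forall a b c, [/\ a != b, b != c & c != a] -> [/\ ~~ e a b, ~~ e b c & ~~ e c a] ->
     (x \in [:: a; b; c]) && (y \in [:: a; b; c])) ->
  f x != f y -> forall col, #|[pred v | f v == col]| <= 2.
Proof.
move=> proper indep3 fx_fy col; rewrite leqNgt; apply/negP.
move=> /card_gt2P[a [b [c [[/eqP fa /eqP fb /eqP fc] distinct]]]].
have nonadj u v : f u = col -> f v = col -> ~~ e u v.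
  by move=> fu fv; apply/negP => /proper; rewrite fu fv eqxx.
have /andP[x_abc y_abc] := indep3 a b c distinct
  (And3 (nonadj a b fa fb) (nonadj b c fb fc) (nonadj c a fc fa)).
have in_class u : u \in [:: a; b; c] -> f u = col by rewrite !inE => /or3P[] /eqP->.
by move: fx_fy; rewrite (in_class x x_abc) (in_class y y_abc) eqxx.
Qed.

Definition theta_nat (m n : nat) : bool :=
  ((m, n) \in theta244_edges) || ((n, m) \in theta244_edges).

Definition sq_theta_nat (m n : nat) : bool :=
  (m != n) && (theta_nat m n || has (fun z => theta_nat m z && theta_nat z n) (iota 0 9)).

Lemma sq_theta244E (x y : 'I_9) : sq_graph theta244 x y = sq_theta_nat x y.
Proof.
rewrite /sq_graph /sq_theta_nat; congr (_ && (_ || _)).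
apply/existsP/hasP => [[z xzy] | [n n_lt xny]].
  by exists (val z); rewrite ?mem_iota ?ltn_ord.
have n_lt9 : n < 9 by rewrite mem_iota in n_lt.
by exists (Ordinal n_lt9).
Qed.

Lemma all_iota_ord (n : nat) (P : nat -> bool) : all P (iota 0 n) -> forall x : 'I_n, P x.
Proof. by move=> /allP allP x; apply: allP; rewrite mem_iota ltn_ord. Qed.

Definition sq_theta244_edges : seq (nat * nat) :=
  [:: (0, 1); (0, 2); (0, 3); (0, 4); (0, 6); (0, 7); (1, 2); (1, 4); (1, 5); (1, 7);
      (1, 8); (2, 3); (2, 5); (2, 6); (2, 8); (3, 4); (3, 5); (3, 6); (4, 5); (5, 8);
      (6, 7); (6, 8); (7, 8)].

Lemma sq_theta244_listed (x y : 'I_9) : sq_graph theta244 x y ->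
  ((val x, val y) \in sq_theta244_edges) || ((val y, val x) \in sq_theta244_edges).
Proof.
have listed_nat : all (fun m => all (fun n => sq_theta_nat m n ==>
    ((m, n) \in sq_theta244_edges) || ((n, m) \in sq_theta244_edges)) (iota 0 9)) (iota 0 9).
  by vm_compute.
rewrite sq_theta244E.
by move: listed_nat => /all_iota_ord/(_ x)/all_iota_ord/(_ y)/implyP.
Qed.

(* Every independent 3-set of G contains 2 and 4 (the only one is {2,4,7}). *)
Lemma sq_theta244_indep3 (a b c : 'I_9) :
  [/\ a != b, b != c & c != a] ->
  [/\ ~~ sq_graph theta244 a b, ~~ sq_graph theta244 b c & ~~ sq_graph theta244 c a] ->
  (inord 2 \in [:: a; b; c]) && (inord 4 \in [:: a; b; c]).
Proof.
have indep_nat : all (fun m => all (fun n => all (fun p =>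
    [&& m != n, n != p, p != m, ~~ sq_theta_nat m n, ~~ sq_theta_nat n p
      & ~~ sq_theta_nat p m] ==> (2 \in [:: m; n; p]) && (4 \in [:: m; n; p]))
    (iota 0 9)) (iota 0 9)) (iota 0 9).
  by vm_compute.
rewrite -!(inj_eq val_inj) !sq_theta244E => -[ab bc ca] [ab' bc' ca'].
move: indep_nat => /all_iota_ord/(_ a)/all_iota_ord/(_ b)/all_iota_ord/(_ c)/implyP.
rewrite ab bc ca ab' bc' ca' => /(_ isT).
by rewrite -!(mem_map val_inj) /= !inordK.
Qed.

(* A good precolouring of 2, 0, 5 (seen from 4) extends greedily along
   1,3,6,8,4,7 to a proper L-colouring of G separating 2 and 4.  Each vertex
   avoids the colours of its earlier neighbours; vertex 4 also avoids colour 2. *)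
Lemma sq_theta244_completion (C : eqType) (L : 'I_9 -> seq C) (g2 g0 g5 : C) :
  k_assignment 5 L ->
  good_precolouring (L (inord 2)) (L (inord 0)) (L (inord 5)) (L (inord 4)) g2 g0 g5 ->
  exists f : 'I_9 -> C, [/\ forall v, f v \in L v,
    forall x y, sq_graph theta244 x y -> f x != f y & f (inord 2) != f (inord 4)].
Proof.
move=> HL /and5P[g2_L g0_L g5_L g0_g2 /andP[g5_g2 redundant]].
have fresh v s : size s < 5 -> exists2 x, x \in L v & x \notin s.
  by move=> lt_s; have [Uv size_v] := HL v; apply: fresh_colour; rewrite ?size_v.
have [g1 g1_L /[!inE] /[!negb_or] /and3P[g1_g2 g1_g0 g1_g5]] :=
  fresh (inord 1) [:: g2; g0; g5] isT.
have [g3 g3_L /[!inE] /[!negb_or] /and3P[g3_g2 g3_g0 g3_g5]] :=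
  fresh (inord 3) [:: g2; g0; g5] isT.
have [g6 g6_L /[!inE] /[!negb_or] /and3P[g6_g2 g6_g0 g6_g3]] :=
  fresh (inord 6) [:: g2; g0; g3] isT.
have [g8 g8_L /[!inE] /[!negb_or] /and4P[g8_g2 g8_g1 g8_g5 g8_g6]] :=
  fresh (inord 8) [:: g2; g1; g5; g6] isT.
have [g4 g4_L /[!inE] /[!negb_or] /and5P[g4_g0 g4_g1 g4_g3 g4_g5 g4_g2]] :
    exists2 x, x \in L (inord 4) & x \notin [:: g0; g1; g3; g5; g2].
  have [U4 size4] := HL (inord 4); apply: fresh_colour_redundant; rewrite ?size4 //.
  case/or3P: redundant => [g0_out | g5_out | /eqP g0_g5] /=.
  - by rewrite g0_out.
  - by rewrite g5_out !orbT.
  - by rewrite g0_g5 !inE eqxx !orbT.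
have [g7 g7_L /[!inE] /[!negb_or] /and4P[g7_g0 g7_g1 g7_g6 g7_g8]] :=
  fresh (inord 7) [:: g0; g1; g6; g8] isT.
pose cols := [:: g0; g1; g2; g3; g4; g5; g6; g7; g8].
have cols_L : all (fun n => nth g0 cols n \in L (inord n)) (iota 0 9).
  by rewrite /= g0_L g1_L g2_L g3_L g4_L g5_L g6_L g7_L g8_L.
have cols_proper : all (fun p => nth g0 cols p.1 != nth g0 cols p.2) sq_theta244_edges.
  by rewrite /=; repeat (apply/andP; split); by [|rewrite eq_sym].
exists (fun v => nth g0 cols v); split.
- by move=> v; rewrite -[v in L v]inord_val; apply: all_iota_ord cols_L v.
- move=> x y /sq_theta244_listed /orP[] /(allP cols_proper) //=.
  by rewrite eq_sym.
- by rewrite !inordK // eq_sym.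
Qed.

Theorem lemma3p5 : equitably_choosable (sq_graph theta244) 5.
Proof.
move=> C L HL.
have lists_ok l : l \in [:: L (inord 2); L (inord 0); L (inord 5); L (inord 4)] ->
    uniq l /\ size l = 5.
  by rewrite !inE => /or4P[] /eqP->.
have [g2 [g0 [g5 good]]] := exists_good_precolouring (k := 5) isT lists_ok.
have [f [f_L f_proper f2_f4]] := sq_theta244_completion HL good.
(* ceil(9/5) = 2, and no colour class of f has three elements. *)
exists f; split=> // col; rewrite card_ord.
exact: colour_class_le2 f_proper sq_theta244_indep3 f2_f4 col.
Qed.
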